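(* Let $(G_n)$ be a sequence of graphs with $\min_{u\in V}\delta_u=\omega(\log n)$, fix $p\in[0,1]$, and for each $n$ run the $(p,\mathcal B)$-Deterministic-Majority dynamics on $G_n$ from the configuration in which every node is $\mathcal R$. (Fast disruption) If $p>1/2$, then $\Pr(\mathrm{vol}(B^{(1)})=\mathrm{vol}(V))=1-o(1)$, and consequently $\Pr(\tau=1)=1-o(1)$. (Slow disruption) If $p<1/2$, then for every $K>0$, $\Pr(\forall t\le n^K:\ \mathrm{vol}(R^{(t)})=\mathrm{vol}(V))=1-o(1)$, and consequently $\Pr(\tau>n^K)=1-o(1)$.
   Context: $G_n=(V,E)$, $V=\{1,\dots,n\}$, $N(u)$ neighbourhood, $\delta_u=|N(u)|$, $\mathrm{vol}(S)=\sum_{v\in S}\delta_v$; asymptotics as $n\to\infty$. States in $\{\mathcal R,\mathcal B\}$; $R^{(t)},B^{(t)}$ are the sets of nodes in each state at round $t$, and $\tau=\inf\{t\ge0:\mathrm{vol}(B^{(t)})/\mathrm{vol}(V)>1/2\}$. $(p,\mathcal B)$-Deterministic-Majority: in each round $t\ge1$, every node $u$, for each of its neighbours $v$ independently, sees $v$ as $\mathcal B$ with probability $p$ and otherwise sees $v$'s true state at round $t-1$; $u$ adopts the state seen by the majority of its whole neighbourhood (ties broken by some fixed rule, e.g. uniformly at random). *)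

From HB Require Import structures.
From mathcomp Require Import all_boot all_order all_algebra.
From mathcomp Require Import all_classical all_reals all_analysis.
Set Implicit Arguments. Unset Strict Implicit. Unset Printing Implicit Defensive.
Import Order.TTheory GRing.Theory Num.Theory.
Local Open Scope ring_scope.

(* A graph on V = 'I_n is a relation e : rel 'I_n (assumed symmetric and
   irreflexive in the theorem).  A configuration assigns to every node a
   state: true = B (blue, the disrupting state), false = R. *)
Definition config (n : nat) := {ffun 'I_n -> bool}.

Definition nbhd n (e : rel 'I_n) (u : 'I_n) : {set 'I_n} := [set v | e u v].
Definition deg n (e : rel 'I_n) (u : 'I_n) : nat := #|nbhd e u|.
Definition vol n (e : rel 'I_n) (S : pred 'I_n) : nat :=
  (\sum_(v | S v) deg e v)%N.
Definition volV n (e : rel 'I_n) : nat := vol e predT.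
Definition Bset n (x : config n) : pred 'I_n := fun v => x v.
Definition Rset n (x : config n) : pred 'I_n := fun v => ~~ x v.

Section Dynamics.
Variable R : realType.

(* Probability that u sees neighbour v as B: with prob. p it sees B,
   otherwise it sees the true state of v. *)
Definition seeB (p : R) n (x : config n) (v : 'I_n) : R :=
  p + (1 - p) * (x v)%:R.

(* Majority rule given that the set S of neighbours is seen as B:
   probability of adopting B (ties broken uniformly at random). *)
Definition adoptB n (e : rel 'I_n) (u : 'I_n) (S : {set 'I_n}) : R :=
  if (deg e u < 2 * #|S|)%N then 1
  else if (2 * #|S| == deg e u)%N then 2^-1 else 0.

Definition probB (p : R) n (e : rel 'I_n) (x : config n) (u : 'I_n) : R :=
  \sum_(S : {set 'I_n} | S \subset nbhd e u)
     (\prod_(v in S) seeB p x v) *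
     (\prod_(v in nbhd e u :\: S) (1 - seeB p x v)) * adoptB e u S.

Definition trans (p : R) n (e : rel 'I_n) (x y : config n) : R :=
  \prod_(u : 'I_n) (if y u then probB p e x u else 1 - probB p e x u).

Definition traj n T := {ffun 'I_T.+1 -> config n}.
Definition at_ n T (w : traj n T) (t : nat) : config n := w (inord t).

Definition all_R n : config n := [ffun => false].

Definition path_prob (p : R) n (e : rel 'I_n) T (w : traj n T) : R :=
  (w ord0 == all_R n)%:R *
  \prod_(i < T) trans p e (at_ w i) (at_ w i.+1).

Definition Pr (p : R) n (e : rel 'I_n) T (E : pred (traj n T)) : R :=
  \sum_(w : traj n T | E w) path_prob p e w.

Definition Bfrac n (e : rel 'I_n) (x : config n) : R :=
  (vol e (Bset x))%:R / (volV e)%:R.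

End Dynamics.

(* From the all-R configuration, node [u] sees each of its [deg u] neighbours
   as B independently with probability [p], so a set [S] of neighbours is seen
   as B with probability [p ^ |S| (1 - p) ^ (deg u - |S|)].  When the majority
   goes against the bias of [p], the larger exponent sits on the smaller of
   [p] and [1 - p], so this weight is at most [(p (1 - p)) ^ (deg u / 2)];
   summing over the [2 ^ deg u] sets bounds the probability of such a majority
   by [(2 sqrt (p (1 - p))) ^ deg u].  For [p <> 1/2] the base is [< 1], and
   [deg u = omega (log n)] makes the bound [n ^ -M] for any fixed [M].
   A union bound over the nodes shows that for [p > 1/2] the trajectory
   all-R -> all-B alone has probability at least [1 - 1/n]; for [p < 1/2]
   all-R reproduces itself, and a union bound over nodes and the at most
   [n ^ K] rounds gives the same for the constant all-R trajectory. *)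

From HB Require Import structures.
From mathcomp Require Import all_boot all_order all_algebra.
From mathcomp Require Import all_classical all_reals all_analysis.
From mathcomp Require Import lra zify.
Import Order.TTheory GRing.Theory Num.Theory numFieldNormedType.Exports.
Local Open Scope classical_set_scope.
Local Open Scope ring_scope.

Set Implicit Arguments.
Unset Strict Implicit.

Section Dynamics.
Variable R : realType.

Lemma prodrD_subsets (T : finType) (A : {set T}) (a b : T -> R) :
  \prod_(v in A) (a v + b v) =
  \sum_(S : {set T} | S \subset A)
    (\prod_(v in S) a v) * \prod_(v in A :\: S) b v.
Proof.
pose a' v := if v \in A then a v else 0.
pose b' v := if v \in A then b v else 1.
have -> : \prod_(v in A) (a v + b v) = \prod_v (a' v + b' v).
  rewrite big_mkcond; apply: eq_bigr => v _; rewrite /a' /b'.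
  by case: (v \in A); rewrite ?add0r.
rewrite bigA_distr (bigID (fun S : {set T} => S \subset A)) /=.
rewrite [X in _ + X]big1 ?addr0 => [|S /subsetPn[v vS vA]]; last first.
  by rewrite (bigD1 v) //= vS /a' (negbTE vA) mul0r.
apply: eq_bigr => S SA; rewrite (bigID (mem S)) /=; congr (_ * _).
  by apply: eq_bigr => v vS; rewrite vS /a' (fintype.subsetP SA v vS).
rewrite [RHS]big_mkcond [LHS]big_mkcond; apply: eq_bigr => v _.
by rewrite /b' finset.in_setD; case: (v \in S); case: (v \in A).
Qed.

Section Probabilities.
Variables (p : R) (n : nat) (e : rel 'I_n).
Hypotheses (p0 : 0 <= p) (p1 : p <= 1).

Lemma seeB_ge0 (x : config n) v : 0 <= seeB p x v.
Proof.
by rewrite /seeB; case: (x v) => /=; rewrite ?mulr1 ?mulr0 ?addr0 // addrC subrK.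
Qed.

Lemma seeB_le1 (x : config n) v : seeB p x v <= 1.
Proof.
by rewrite /seeB; case: (x v) => /=; rewrite ?mulr1 ?mulr0 ?addr0 // addrC subrK.
Qed.

Lemma adoptB_ge0 u S : 0 <= adoptB R e u S.
Proof. by rewrite /adoptB; case: ifP => _; [|case: ifP => _]; lra. Qed.

Lemma adoptB_le1 u S : adoptB R e u S <= 1.
Proof. by rewrite /adoptB; case: ifP => _; [|case: ifP => _]; lra. Qed.

Lemma probB_ge0 (x : config n) u : 0 <= probB p e x u.
Proof.
apply: sumr_ge0 => S _; rewrite mulr_ge0 ?adoptB_ge0 // mulr_ge0 //.
  by apply: prodr_ge0 => v _; apply: seeB_ge0.
by apply: prodr_ge0 => v _; rewrite subr_ge0 seeB_le1.
Qed.

Lemma probB_le1 (x : config n) u : probB p e x u <= 1.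
Proof.
have <- : \prod_(v in nbhd e u) (seeB p x v + (1 - seeB p x v)) = 1.
  by apply: big1 => v _; rewrite addrC subrK.
rewrite prodrD_subsets; apply: ler_sum => S _.
rewrite -[X in _ <= X]mulr1 ler_wpM2l ?adoptB_le1 // mulr_ge0 //.
  by apply: prodr_ge0 => v _; apply: seeB_ge0.
by apply: prodr_ge0 => v _; rewrite subr_ge0 seeB_le1.
Qed.

Lemma trans_ge0 (x y : config n) : 0 <= trans p e x y.
Proof.
apply: prodr_ge0 => u _; case: (y u); first exact: probB_ge0.
by rewrite subr_ge0 probB_le1.
Qed.

Lemma sum_trans (x : config n) : \sum_y trans p e x y = 1.
Proof.
pose F u (b : bool) := if b then probB p e x u else 1 - probB p e x u.
rewrite (eq_bigr (fun y : {ffun 'I_n -> bool} => \prod_u F u (y u))) //.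
rewrite -bigA_distr_bigA; apply: big1 => u _.
by rewrite big_bool /F /= addrC subrK.
Qed.

End Probabilities.
End Dynamics.

Section Paths.
Variable R : realType.

Definition ffun_cons (C : finType) T (x : C) (t : {ffun 'I_T.+1 -> C}) :
    {ffun 'I_T.+2 -> C} :=
  [ffun i => if unlift ord0 i is Some j then t j else x].

Lemma ffun_cons0 (C : finType) T x (t : {ffun 'I_T.+1 -> C}) :
  ffun_cons x t ord0 = x.
Proof. by rewrite ffunE unlift_none. Qed.

Lemma ffun_cons_inordS (C : finType) T x (t : {ffun 'I_T.+1 -> C}) i :
  (i <= T)%N -> ffun_cons x t (inord i.+1) = t (inord i).
Proof.
move=> iT; have -> : inord i.+1 = lift ord0 (inord i : 'I_T.+1).
  by apply: val_inj; rewrite /= /bump /= !inordK.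
by rewrite ffunE liftK.
Qed.

Lemma sum_ffun_cons (C : finType) T (F : {ffun 'I_T.+2 -> C} -> R) :
  \sum_w F w = \sum_x \sum_(t : {ffun 'I_T.+1 -> C}) F (ffun_cons x t).
Proof.
rewrite pair_big /= (reindex (fun xt => ffun_cons xt.1 xt.2)) //.
apply: onW_bij; exists (fun w : {ffun 'I_T.+2 -> C} =>
    (w ord0, [ffun j : 'I_T.+1 => w (lift ord0 j)])).
  case=> x t; rewrite ffun_cons0; congr (_, _).
  by apply/ffunP => j; rewrite !ffunE liftK.
move=> w; apply/ffunP => i; rewrite ffunE.
by case: unliftP => [j ->|->]; rewrite ?ffunE.
Qed.

Lemma sum_kernel_paths (C : finType) (K : C -> C -> R)
    (K1 : forall x, \sum_y K x y = 1) T (g : C -> R) :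
  \sum_(w : {ffun 'I_T.+1 -> C})
     g (w ord0) * \prod_(i < T) K (w (inord i)) (w (inord i.+1))
  = \sum_x g x.
Proof.
elim: T g => [|T IH] g.
  under eq_bigr do rewrite big_ord0 mulr1.
  rewrite (reindex (fun x => [ffun=> x])) /=.
    by apply: eq_bigr => x _; rewrite ffunE.
  apply: onW_bij; exists (fun w : {ffun 'I_1 -> C} => w ord0) => [x|w].
    by rewrite ffunE.
  by apply/ffunP => i; rewrite ffunE (ord1 i).
rewrite sum_ffun_cons; apply: eq_bigr => x _.
transitivity (g x * \sum_(t : {ffun 'I_T.+1 -> C})
    K x (t ord0) * \prod_(i < T) K (t (inord i)) (t (inord i.+1))).
  rewrite mulr_sumr; apply: eq_bigr => t _.
  rewrite big_ord_recl ffun_cons0 !mulrA; congr (_ * _ * _).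
    have inord0 m : (inord 0 : 'I_m.+1) = ord0.
      by apply: val_inj; rewrite /= inordK.
    by rewrite ffun_cons_inordS // !inord0 ffun_cons0.
  apply: eq_bigr => i _; have liftS : lift ord0 i = i.+1 :> nat by [].
  by rewrite liftS !ffun_cons_inordS // ltnW.
by rewrite IH K1 mulr1.
Qed.

End Paths.

Section Trajectories.
Variables (R : realType) (p : R) (n : nat) (e : rel 'I_n).
Hypotheses (p0 : 0 <= p) (p1 : p <= 1).

Lemma sum_path_prob T : \sum_(w : traj n T) path_prob p e w = 1.
Proof.
rewrite /path_prob /at_.
rewrite (sum_kernel_paths (sum_trans p e) T (fun x => (x == all_R n)%:R)).
by rewrite (bigD1 (all_R n)) //= eqxx big1 ?addr0 // => x /negbTE ->.
Qed.

Lemma path_prob_ge0 T (w : traj n T) : 0 <= path_prob p e w.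
Proof. by rewrite mulr_ge0 // prodr_ge0 // => i _; apply: trans_ge0. Qed.

Lemma Pr_le1 T (E : pred (traj n T)) : Pr p e E <= 1.
Proof.
rewrite -(sum_path_prob T) [X in _ <= X](bigID E) /= lerDl.
by apply: sumr_ge0 => w _; apply: path_prob_ge0.
Qed.

Lemma path_prob_le_Pr T (E : pred (traj n T)) w :
  E w -> path_prob p e w <= Pr p e E.
Proof.
move=> Ew; rewrite /Pr (bigD1 w) //= lerDl.
by apply: sumr_ge0 => v _; apply: path_prob_ge0.
Qed.

Definition all_B : config n := [ffun => true].

Lemma trans_all_R (x : config n) :
  trans p e x (all_R n) = \prod_u (1 - probB p e x u).
Proof. by apply: eq_bigr => u _; rewrite ffunE. Qed.

Lemma trans_all_B (x : config n) : trans p e x all_B = \prod_u probB p e x u.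
Proof. by apply: eq_bigr => u _; rewrite ffunE. Qed.

Definition stay_all_R T : traj n T := [ffun => all_R n].

Definition flip_to_all_B : traj n 1 :=
  [ffun i => if i == ord0 then all_R n else all_B].

Lemma path_prob_stay_all_R T :
  path_prob p e (stay_all_R T) = (\prod_u (1 - probB p e (all_R n) u)) ^+ T.
Proof.
rewrite /path_prob /at_ !ffunE eqxx mul1r -trans_all_R.
rewrite -[in RHS](card_ord T) -prodr_const.
by apply: eq_bigr => i _; rewrite !ffunE.
Qed.

Lemma flip_to_all_B_at0 : at_ flip_to_all_B 0 = all_R n.
Proof.
rewrite /at_ ffunE (_ : inord 0 == ord0) //.
by apply/eqP/val_inj; rewrite /= inordK.
Qed.

Lemma flip_to_all_B_at1 : at_ flip_to_all_B 1 = all_B.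
Proof.
rewrite /at_ ffunE (_ : inord 1 == ord0 = false) //.
by apply/eqP => /(congr1 val); rewrite /= inordK.
Qed.

Lemma path_prob_flip_to_all_B :
  path_prob p e flip_to_all_B = \prod_u probB p e (all_R n) u.
Proof.
rewrite /path_prob big_ord1 flip_to_all_B_at0 flip_to_all_B_at1 trans_all_B.
by rewrite ffunE !eqxx mul1r.
Qed.

End Trajectories.

Section Chernoff.
Variable R : realType.

Lemma expr_le_sqrtM_pow (x y : R) i j : 0 <= y -> y <= x -> (i <= j)%N ->
  x ^+ i * y ^+ j <= Num.sqrt (x * y) ^+ (i + j).
Proof.
move=> y0 yx /subnKC <-.
have xy0 : 0 <= x * y by rewrite mulr_ge0 // (le_trans y0).
rewrite exprD mulrA -exprMn addnA addnn -mul2n exprD exprM sqr_sqrtr //.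
rewrite ler_wpM2l ?exprn_ge0 // lerXn2r ?nnegrE ?sqrtr_ge0 //.
apply: le_trans (_ : Num.sqrt (y ^+ 2) <= _); first by rewrite sqrtr_sqr ger0_norm.
by rewrite ler_wsqrtr // expr2 ler_wpM2r.
Qed.

Definition chernoff_rate (p : R) := 2 * Num.sqrt (p * (1 - p)).

Lemma chernoff_rate_ge0 p : 0 <= chernoff_rate p.
Proof. by rewrite mulr_ge0 ?sqrtr_ge0. Qed.

Lemma chernoff_rate_lt1 p :
  0 <= p -> p <= 1 -> p != 2^-1 -> chernoff_rate p < 1.
Proof.
move=> p0 p1 p_half; rewrite /chernoff_rate.
have pq0 : 0 <= p * (1 - p) by rewrite mulr_ge0 // subr_ge0.
have := sqr_sqrtr pq0; have := sqrtr_ge0 (p * (1 - p)).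
move: (Num.sqrt _) => s s0; rewrite expr2 => ss.
have [hp|hp] : p < 2^-1 \/ 2^-1 < p by case: ltgtP p_half => // *; [left|right].
all: nra.
Qed.

Section SubsetWeights.
Variables (T : finType) (p : R) (N : {set T}).
Hypotheses (p0 : 0 <= p) (p1 : p <= 1).

Definition subset_weight (S : {set T}) := p ^+ #|S| * (1 - p) ^+ #|N :\: S|.

Lemma subset_weight_ge0 S : 0 <= subset_weight S.
Proof. by rewrite mulr_ge0 // exprn_ge0 // subr_ge0. Qed.

Lemma sum_subset_weight : \sum_(S : {set T} | S \subset N) subset_weight S = 1.
Proof.
have : \prod_(v in N) (p + (1 - p)) = 1 by apply: big1 => v _; rewrite addrC subrK.
by rewrite prodrD_subsets => <-; apply: eq_bigr => S _; rewrite !prodr_const.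
Qed.

Lemma sum_subset_weight_le (s : R) (c : {set T} -> R) :
    0 <= s -> (forall S : {set T}, S \subset N -> 0 <= c S <= 1) ->
    (forall S : {set T}, S \subset N -> c S != 0 ->
       subset_weight S <= s ^+ #|N|) ->
  \sum_(S : {set T} | S \subset N) subset_weight S * c S <= (2 * s) ^+ #|N|.
Proof.
move=> s0 c01 small.
apply: le_trans (_ : \sum_(S : {set T} | S \subset N) s ^+ #|N| <= _).
  apply: ler_sum => S SN; have /andP[c0 c1] := c01 S SN.
  have [->|cS0] := eqVneq (c S) 0; first by rewrite mulr0 exprn_ge0.
  by apply: le_trans (small S SN cS0); rewrite ler_piMr ?subset_weight_ge0.
rewrite (eq_bigl (fun S => S \in powerset N)) => [|S]; last by rewrite powersetE.
by rewrite sumr_const card_powerset exprMn -[_ *+ (2 ^ _)]mulr_natr natrX mulrC.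
Qed.

End SubsetWeights.
End Chernoff.

Section MajorityFromAllR.
Variables (R : realType) (p : R) (n : nat) (e : rel 'I_n) (u : 'I_n).

Lemma adoptB_neq0 S : adoptB R e u S != 0 -> (deg e u <= 2 * #|S|)%N.
Proof.
rewrite /adoptB; case: ltnP => [/ltnW -> //|_].
by case: ifP => [/eqP ->|_]; rewrite ?eqxx.
Qed.

Lemma one_sub_adoptB_neq0 S :
  1 - adoptB R e u S != 0 -> (2 * #|S| <= deg e u)%N.
Proof.
by rewrite /adoptB; case: ltnP => [_|ge _ //]; rewrite subrr eqxx.
Qed.

Lemma probB_all_R : probB p e (all_R n) u =
  \sum_(S : {set 'I_n} | S \subset nbhd e u)
     subset_weight p (nbhd e u) S * adoptB R e u S.
Proof.
apply: eq_bigr => S _; rewrite /seeB /subset_weight -!prodr_const.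
by congr (_ * _ * _); apply: eq_bigr => v _; rewrite ffunE mulr0 addr0.
Qed.

Lemma one_sub_probB_all_R : 1 - probB p e (all_R n) u =
  \sum_(S : {set 'I_n} | S \subset nbhd e u)
     subset_weight p (nbhd e u) S * (1 - adoptB R e u S).
Proof.
rewrite -{1}(sum_subset_weight p (nbhd e u)) probB_all_R -sumrB.
by apply: eq_bigr => S _; rewrite mulrBr mulr1.
Qed.

Lemma card_nbhd_split (S : {set 'I_n}) :
  S \subset nbhd e u -> deg e u = (#|S| + #|nbhd e u :\: S|)%N.
Proof. by move=> SN; rewrite cardsDS // subnKC // subset_leq_card. Qed.

Lemma probB_all_R_le : 0 <= p -> p < 2^-1 ->
  probB p e (all_R n) u <= chernoff_rate p ^+ deg e u.
Proof.
move=> p0 hp; have p1 : p <= 1 by lra.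
rewrite probB_all_R; apply: (sum_subset_weight_le p0 p1) => [|S _|S SN].
- exact: sqrtr_ge0.
- by rewrite adoptB_ge0 adoptB_le1.
move=> /adoptB_neq0 hS; rewrite /subset_weight mulrC [p * _]mulrC.
rewrite -/(deg e u) (card_nbhd_split SN) addnC.
apply: expr_le_sqrtM_pow; [exact: p0 | lra | ].
move: hS; rewrite (card_nbhd_split SN); lia.
Qed.

Lemma one_sub_probB_all_R_le : 2^-1 < p -> p <= 1 ->
  1 - probB p e (all_R n) u <= chernoff_rate p ^+ deg e u.
Proof.
move=> hp p1; have p0 : 0 <= p by lra.
rewrite one_sub_probB_all_R; apply: (sum_subset_weight_le p0 p1) => [|S _|S SN].
- exact: sqrtr_ge0.
- by rewrite subr_ge0 adoptB_le1 lerBlDr lerDl adoptB_ge0.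
move=> /one_sub_adoptB_neq0 hS; rewrite /subset_weight.
rewrite -/(deg e u) (card_nbhd_split SN).
apply: expr_le_sqrtM_pow; [lra | lra | ].
move: hS; rewrite (card_nbhd_split SN); lia.
Qed.

End MajorityFromAllR.

Section Asymptotics.
Variable R : realType.

Lemma one_sub_sumr_le_prodr (I : Type) (r : seq I) (a : I -> R) :
  (forall i, 0 <= a i <= 1) -> 1 - \sum_(i <- r) a i <= \prod_(i <- r) (1 - a i).
Proof.
move=> a01; elim: r => [|x r IH]; first by rewrite !big_nil subr0.
rewrite !big_cons; have /andP[ax0 ax1] := a01 x.
have : 0 <= \sum_(i <- r) a i by apply: sumr_ge0 => i _; case/andP: (a01 i).
by nra.
Qed.

Lemma one_sub_mulr_sum_le_prodrX (I : finType) (a : I -> R) T :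
    (forall i, 0 <= a i <= 1) -> \sum_i a i <= 1 ->
  1 - T%:R * \sum_i a i <= (\prod_i (1 - a i)) ^+ T.
Proof.
move=> a01; set s := \sum_i a i => s1.
have s0 : 0 <= s by apply: sumr_ge0 => i _; case/andP: (a01 i).
have bernoulli : 1 - s *+ T <= (1 - s) ^+ T.
  have := @one_sub_sumr_le_prodr _ (index_enum 'I_T) (fun=> s).
  by rewrite sumr_const prodr_const card_ord s0 s1; apply.
rewrite mulr_natl (le_trans bernoulli) // lerXn2r ?nnegrE ?subr_ge0 //.
  by rewrite (le_trans _ (one_sub_sumr_le_prodr _ a01)) // subr_ge0.
exact: one_sub_sumr_le_prodr.
Qed.

Lemma near_invn_le (eps : R) : 0 < eps -> \forall n \near \oo, n%:R^-1 <= eps.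
Proof.
move=> e0; exists (Num.truncn eps^-1).+1 => // n /= hn.
have n0 : 0 < n%:R :> R by rewrite ltr0n (leq_trans _ hn).
rewrite -[eps]invrK lef_pV2 ?posrE ?invr_gt0 //.
by rewrite (le_trans (ltW (truncnS_gt _))) // ler_nat.
Qed.

Lemma cvg_to1 (f : nat -> R) :
  (\forall n \near \oo, 1 - n%:R^-1 <= f n) -> (forall n, f n <= 1) ->
  f @ \oo --> (1 : R).
Proof.
move=> lb ub; apply/cvgrPdist_le => eps e0; near=> n.
have lbn : 1 - n%:R^-1 <= f n by near: n.
have epsn : n%:R^-1 <= eps by near: n; exact: near_invn_le.
by have := ub n; rewrite ger0_norm ?subr_ge0 //; lra.
Unshelve. all: by end_near.
Qed.

Lemma Pr_cvg1 (p : R) (e : forall n, rel 'I_n) (T : nat -> nat)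
    (E : forall n, pred (traj n (T n))) (w : forall n, traj n (T n)) :
  0 <= p -> p <= 1 ->
  (\forall n \near \oo, E n (w n) /\ 1 - n%:R^-1 <= path_prob p (e n) (w n)) ->
  (fun n => Pr p (e n) (E n)) @ \oo --> (1 : R).
Proof.
move=> p0 p1 lb; apply: cvg_to1 => [|n]; last exact: Pr_le1.
by apply: filterS lb => n [En /le_trans]; apply; apply: path_prob_le_Pr.
Qed.

Lemma sum_le_invXn (n M : nat) (a : 'I_n -> R) : (0 < n)%N ->
  (forall u, a u <= (n%:R ^+ M.+1)^-1) -> \sum_u a u <= (n%:R ^+ M)^-1.
Proof.
move=> n0 small; apply: le_trans (_ : \sum_(u : 'I_n) (n%:R ^+ M.+1)^-1 <= _).
  by apply: ler_sum => u _.
rewrite sumr_const card_ord -[(_ ^+ M.+1)^-1 *+ _]mulr_natl exprS invfM mulrA.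
by rewrite divff ?mul1r // pnatr_eq0 -lt0n.
Qed.

End Asymptotics.

Section LargeDegrees.
Variables (R : realType) (G : forall n : nat, rel 'I_n).
Arguments G : clear implicits.
Hypothesis Gdeg : forall C : R, exists N : nat, forall n : nat, (N <= n)%N ->
  forall u : 'I_n, C * ln (n%:R) <= (deg (G n) u)%:R.

Lemma deg_gt0 : \forall n \near \oo, forall u : 'I_n, (0 < deg (G n) u)%N.
Proof.
have [N degN] := Gdeg 1; exists (maxn N 2) => // n /=.
rewrite geq_max => /andP[nN n2] u.
have : 0 < ln (n%:R : R) by rewrite ln_gt0 // ltr1n.
by have := degN n nN u; rewrite mul1r -(ltr0n R); lra.
Qed.

(* [rho] may be [0], where [ln] is junk: compare with [r = (1 + rho) / 2]. *)
Lemma expr_deg_le_invXn (rho : R) (M : nat) : 0 <= rho -> rho < 1 ->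
  \forall n \near \oo, forall u : 'I_n, rho ^+ deg (G n) u <= (n%:R ^+ M)^-1.
Proof.
move=> rho0 rho1; pose r := (1 + rho) / 2.
have r0 : 0 < r by rewrite /r; lra.
have lnr0 : ln r < 0 by rewrite ln_lt0 // r0 /r; lra.
have [N degN] := Gdeg (- M%:R / ln r).
exists (maxn N 1) => // n /=; rewrite geq_max => /andP[nN n1] u.
have n0 : 0 < n%:R :> R by rewrite ltr0n.
apply: le_trans (_ : r ^+ deg (G n) u <= _).
  by rewrite lerXn2r ?nnegrE /r; lra.
rewrite -ler_ln ?posrE ?invr_gt0 ?exprn_gt0 // lnV ?posrE ?exprn_gt0 // !lnXn //.
rewrite -[X in X <= _]mulr_natr -[X in - X]mulr_natr.
have := degN n nN u; move: (deg _ _)%:R (ln n%:R) => d l dl.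
have : (d - - M%:R / ln r * l) * ln r <= 0.
  by rewrite mulr_ge0_le0 ?subr_ge0 // ltW.
by rewrite mulrBl mulrAC divfK ?ltr0_neq0 //; lra.
Qed.

Lemma path_prob_flip_to_all_B_ge (p : R) : 2^-1 < p -> p <= 1 ->
  \forall n \near \oo, 1 - n%:R^-1 <= path_prob p (G n) (flip_to_all_B n).
Proof.
move=> hp p1; have p0 : 0 <= p by lra.
have rate_lt1 : chernoff_rate p < 1 by rewrite chernoff_rate_lt1 // gt_eqF.
near=> n.
have decay : forall u : 'I_n, chernoff_rate p ^+ deg (G n) u <= (n%:R ^+ 2)^-1.
  by near: n; apply: expr_deg_le_invXn => //; apply: chernoff_rate_ge0.
have n0 : (0 < n)%N by near: n; exists 1%N.
rewrite path_prob_flip_to_all_B.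
have <- : \prod_u (1 - (1 - probB p (G n) (all_R n) u)) =
          \prod_u probB p (G n) (all_R n) u.
  by apply: eq_bigr => u _; rewrite opprB addrC subrK.
apply: le_trans (one_sub_sumr_le_prodr _ _) => [|u]; last first.
  by rewrite subr_ge0 probB_le1 // lerBlDr lerDl probB_ge0.
rewrite lerD2l lerN2 -[n%:R]expr1 sum_le_invXn // => u.
exact: le_trans (one_sub_probB_all_R_le _ _ hp p1) (decay u).
Unshelve. all: by end_near.
Qed.

Lemma path_prob_stay_all_R_ge (p K : R) : 0 <= p -> p < 2^-1 ->
  \forall n \near \oo, 1 - n%:R^-1 <=
    path_prob p (G n) (stay_all_R n (Num.truncn ((n%:R : R) `^ K))).
Proof.
move=> p0 hp; have p1 : p <= 1 by lra.
have rate_lt1 : chernoff_rate p < 1 by rewrite chernoff_rate_lt1 ?lt_eqF.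
pose k := (Num.truncn K).+1.
near=> n.
have decay : forall u : 'I_n, chernoff_rate p ^+ deg (G n) u <= (n%:R ^+ k.+2)^-1.
  by near: n; apply: expr_deg_le_invXn => //; apply: chernoff_rate_ge0.
have n0 : (0 < n)%N by near: n; exists 1%N.
have n1 : 1 <= n%:R :> R by rewrite ler1n.
have nR0 : 0 < n%:R :> R by rewrite ltr0n.
set T := Num.truncn _; set s := \sum_u probB p (G n) (all_R n) u.
have s_le : s <= (n%:R ^+ k.+1)^-1.
  apply: sum_le_invXn => // u.
  exact: le_trans (probB_all_R_le _ _ p0 hp) (decay u).
have s1 : s <= 1 by rewrite (le_trans s_le) // invf_le1 ?exprn_ege1 ?exprn_gt0.
have T_le : T%:R <= n%:R ^+ k :> R.
  apply: le_trans (_ : n%:R `^ K <= _); first by rewrite truncn_le powR_ge0.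
  by rewrite -powR_mulrn ?ler0n // ler_powR // ltW // truncnS_gt.
have Ts_le : T%:R * s <= n%:R^-1.
  apply: le_trans (_ : n%:R ^+ k * (n%:R ^+ k.+1)^-1 <= _).
    by rewrite ler_pM // sumr_ge0 // => u _; apply: probB_ge0.
  by rewrite exprSr invfM mulrA divff ?mul1r // expf_neq0 // pnatr_eq0 -lt0n.
have a01 u : 0 <= probB p (G n) (all_R n) u <= 1.
  by rewrite probB_ge0 ?probB_le1.
rewrite path_prob_stay_all_R.
by apply: le_trans (one_sub_mulr_sum_le_prodrX T a01 s1); rewrite lerD2l lerN2.
Unshelve. all: by end_near.
Qed.

End LargeDegrees.

Section Volumes.
Variables (R : realType) (n : nat) (e : rel 'I_n).

Lemma vol_Bset_all_B : vol e (Bset (all_B n)) = volV e.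
Proof. by apply: eq_bigl => v; rewrite /Bset ffunE. Qed.

Lemma vol_Rset_all_R : vol e (Rset (all_R n)) = volV e.
Proof. by apply: eq_bigl => v; rewrite /Rset ffunE. Qed.

Lemma Bfrac_all_R : Bfrac R e (all_R n) = 0.
Proof. by rewrite /Bfrac /vol big_pred0 ?mul0r // => v; rewrite /Bset ffunE. Qed.

Lemma Bfrac_all_B : (0 < volV e)%N -> Bfrac R e (all_B n) = 1.
Proof. by move=> V0; rewrite /Bfrac vol_Bset_all_B divff // pnatr_eq0 -lt0n. Qed.

Lemma volV_gt0 (u : 'I_n) : (0 < deg e u)%N -> (0 < volV e)%N.
Proof. by move=> du; rewrite /volV /vol (bigD1 u) //= ltn_addr. Qed.

Lemma stay_all_R_at T t : at_ (stay_all_R n T) t = all_R n.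
Proof. by rewrite /at_ ffunE. Qed.

End Volumes.

Theorem proposition6p2 (R : realType) (G : forall n : nat, rel 'I_n)
  (Gsym : forall n, symmetric (G n)) (Girr : forall n, irreflexive (G n))
  (Gdeg : forall C : R, exists N : nat, forall n : nat, (N <= n)%N ->
            forall u : 'I_n, C * ln (n%:R) <= (deg (G n) u)%:R)
  (p : R) (p0 : 0 <= p) (p1 : p <= 1) :
  (2^-1 < p ->
     (fun n => Pr p (G n)
        (fun w : traj n 1 => vol (G n) (Bset (at_ w 1)) == volV (G n)))
       @ \oo --> (1 : R)
     /\
     (fun n => Pr p (G n)
        (fun w : traj n 1 => (Bfrac R (G n) (at_ w 0) <= 2^-1)
                             && (2^-1 < Bfrac R (G n) (at_ w 1))))
       @ \oo --> (1 : R))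
  /\
  (p < 2^-1 -> forall K : R, 0 < K ->
     (fun n => Pr p (G n)
        (fun w : traj n (Num.truncn ((n%:R : R) `^ K)) =>
           [forall t : 'I_(Num.truncn ((n%:R : R) `^ K)).+1,
              vol (G n) (Rset (at_ w t)) == volV (G n)]))
       @ \oo --> (1 : R)
     /\
     (fun n => Pr p (G n)
        (fun w : traj n (Num.truncn ((n%:R : R) `^ K)) =>
           [forall t : 'I_(Num.truncn ((n%:R : R) `^ K)).+1,
              Bfrac R (G n) (at_ w t) <= 2^-1]))
       @ \oo --> (1 : R)).
Proof.
split=> [hp|hp K _].
  have flip := path_prob_flip_to_all_B_ge Gdeg hp p1.
  split; apply: (Pr_cvg1 (w := flip_to_all_B)) => //; near=> n.
    by rewrite flip_to_all_B_at1 vol_Bset_all_B eqxx; split=> //; near: n.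
  have deg0 : forall u : 'I_n, (0 < deg (G n) u)%N by near: n; exact: deg_gt0.
  have n0 : (0 < n)%N by near: n; exists 1%N.
  have V0 := volV_gt0 (deg0 (Ordinal n0)).
  rewrite flip_to_all_B_at0 flip_to_all_B_at1 Bfrac_all_R Bfrac_all_B //.
  by split; [lra | near: n].
have stay := path_prob_stay_all_R_ge Gdeg K p0 hp.
split; apply: (Pr_cvg1 (w := fun n => stay_all_R n _)) => //; near=> n.
  by split; [apply/forallP => t; rewrite stay_all_R_at vol_Rset_all_R | near: n].
by split; [apply/forallP => t; rewrite stay_all_R_at Bfrac_all_R; lra | near: n].
Unshelve. all: by end_near.
Qed.
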